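(* Let $(Y,\mathfrak{T},\mathcal{P})$ be a primal fuzzy topological space. Then the map $Cl^\diamond:\mathbb{I}^Y\to\mathbb{I}^Y$, $Cl^\diamond(\mu)=\mu\cup\mu^\diamond$, is a Kuratowski fuzzy closure operator, i.e. for all $\mu,\nu\in\mathbb{I}^Y$: $Cl^\diamond(0_Y)=0_Y$, $\mu\subseteq Cl^\diamond(\mu)$, $Cl^\diamond(\mu\cup\nu)=Cl^\diamond(\mu)\cup Cl^\diamond(\nu)$, and $Cl^\diamond(Cl^\diamond(\mu))=Cl^\diamond(\mu)$.
   Context: Let $Y$ be a nonempty set and $\mathbb{I}=[0,1]$. A fuzzy set in $Y$ is a map $Y\to\mathbb{I}$; $\mathbb{I}^Y$ is the set of all fuzzy sets; $0_Y,1_Y$ are the constant maps with values $0,1$; $\mu\subseteq\nu$ means $\mu(y)\le\nu(y)$ for all $y$; unions/intersections are pointwise sup/inf; $\bar\mu=1_Y-\mu$. For $\mu,\nu\in\mathbb{I}^Y$, $(\mu\oplus\nu)(y)=\min(\mu(y)+\nu(y),1)$. A fuzzy point $y_t$ ($y\in Y$, $t\in(0,1]$) is the fuzzy set with value $t$ at $y$ and $0$ elsewhere; $y_t\in\mu$ means $t\le\mu(y)$. We write $y_t\prec\mu$ if $t+\mu(y)>1$. A set $F$ of fuzzy points is identified with the fuzzy set $y\mapsto\sup\{t: y_t\in F\}$ (with $\sup\emptyset=0$). A fuzzy topology on $Y$ is a family $\mathfrak{T}\subseteq\mathbb{I}^Y$ containing $0_Y,1_Y$ and closed under finite intersections and arbitrary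 unions. For a fuzzy point $y_t$, $\mathcal{Q}(y_t)=\{\mu\in\mathfrak{T}: y_t\prec\mu\}$. A fuzzy primal on $Y$ is a family $\mathcal{P}\subseteq\mathbb{I}^Y$ such that: (i) $1_Y\notin\mathcal{P}$; (ii) if $\mu\in\mathcal{P}$ and $\nu\subseteq\mu$ then $\nu\in\mathcal{P}$; (iii) if $\mu\cap\nu\in\mathcal{P}$ then $\mu\in\mathcal{P}$ or $\nu\in\mathcal{P}$. A primal fuzzy topological space is a triple $(Y,\mathfrak{T},\mathcal{P})$ with $\mathfrak{T}$ a fuzzy topology and $\mathcal{P}$ a fuzzy primal on $Y$. For $\lambda\in\mathbb{I}^Y$, $\lambda^\diamond$ is the set of fuzzy points $y_t$ such that $\bar{\lambda}\oplus\bar{\mu}\in\mathcal{P}$ for every $\mu\in\mathcal{Q}(y_t)$. *)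

(* fuzzy sets are functions Y -> R (R : realType)
   whose values lie in [0,1]. *)
From HB Require Import structures.
From mathcomp Require Import all_boot all_order all_algebra.
From mathcomp Require Import classical_sets boolp reals.
Set Implicit Arguments. Unset Strict Implicit. Unset Printing Implicit Defensive.
Import Order.TTheory GRing.Theory Num.Theory.
Local Open Scope ring_scope.
Local Open Scope classical_set_scope.

Section Fuzzy.
Variables (R : realType) (Y : Type).

Definition fuzzy (mu : Y -> R) : Prop := forall y, 0 <= mu y <= 1.
Definition fzero : Y -> R := fun _ => 0.
Definition fone : Y -> R := fun _ => 1.
Definition fsub (mu nu : Y -> R) : Prop := forall y, mu y <= nu y.
Definition funion (mu nu : Y -> R) : Y -> R := fun y => Num.max (mu y) (nu y).
Definition finter (mu nu : Y -> R) : Y -> R := fun y => Num.min (mu y) (nu y).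
Definition fcompl (mu : Y -> R) : Y -> R := fun y => 1 - mu y.
Definition foplus (mu nu : Y -> R) : Y -> R := fun y => Num.min (mu y + nu y) 1.
(* arbitrary union: pointwise supremum (sup of the empty set is 0) *)
Definition fbigunion (F : set (Y -> R)) : Y -> R :=
  fun y => sup [set mu y | mu in F].

Definition fuzzy_topology (T : set (Y -> R)) : Prop :=
  [/\ T `<=` fuzzy, T fzero, T fone,
      (forall mu nu, T mu -> T nu -> T (finter mu nu)) &
      (forall F, F `<=` T -> T (fbigunion F))].

Definition fuzzy_primal (P : set (Y -> R)) : Prop :=
  [/\ P `<=` fuzzy, ~ P fone,
      (forall mu nu, fuzzy nu -> P mu -> fsub nu mu -> P nu) &
      (forall mu nu, fuzzy mu -> fuzzy nu -> P (finter mu nu) -> P mu \/ P nu)].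

(* Q(y_t) : open fuzzy sets quasi-coincident with the fuzzy point y_t *)
Definition Qnbhd (T : set (Y -> R)) (y : Y) (t : R) : set (Y -> R) :=
  [set mu | T mu /\ 1 < t + mu y].

(* lambda^diamond, as the fuzzy set y |-> sup { t in (0,1] : y_t in lambda^diamond } *)
Definition fdiamond (T P : set (Y -> R)) (lam : Y -> R) : Y -> R :=
  fun y => sup [set t : R | 0 < t <= 1 /\
     forall mu, Qnbhd T y t mu -> P (foplus (fcompl lam) (fcompl mu))].

Definition Cldiamond (T P : set (Y -> R)) (mu : Y -> R) : Y -> R :=
  funion mu (fdiamond T P mu).

End Fuzzy.

(* Everything is argued on the levels t in (0,1] of the fuzzy points y_t of
   lam^◇, whose supremum is lam^◇(y).  Monotonicity of ◇ is heredity of the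
   primal.  If y_t lies in neither mu^◇ nor nu^◇, there are open witnesses
   m1, m2; m1 ∩ m2 is again open and quasi-coincident with y_t, and the
   primal axiom for intersections moves the membership back to mu or nu.
   For idempotence: if lam-bar ⊕ m-bar is not in the primal for an open m,
   then lam^◇ ⊆ m-bar, so (lam^◇)-bar ⊕ m-bar = 1_Y, which the primal
   excludes. *)
From mathcomp Require Import all_boot all_order all_algebra.
From mathcomp Require Import classical_sets boolp reals.
From mathcomp Require Import lra.
Import Order.TTheory GRing.Theory Num.Theory.
Local Open Scope ring_scope.
Local Open Scope classical_set_scope.

Set Implicit Arguments.

Lemma sup_ge0 (R : realType) (S : set R) :
  (forall t, S t -> 0 <= t) -> 0 <= sup S.
Proof.
move=> S_ge0; have [[[t St] ubS]|no_sup] := pselect (has_sup S).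
  exact: le_trans (S_ge0 t St) (ub_le_sup ubS St).
by rewrite sup_out.
Qed.

Lemma sup_le_nonneg (R : realType) (S : set R) (x : R) :
  0 <= x -> ubound S x -> sup S <= x.
Proof.
move=> x_ge0 ubx; have [->|/set0P S_ne] := eqVneq S set0; first by rewrite sup0.
exact: ge_sup.
Qed.

Section FuzzySets.
Variables (R : realType) (Y : Type).

Lemma fuzzy_funion (mu nu : Y -> R) :
  fuzzy mu -> fuzzy nu -> fuzzy (funion mu nu).
Proof.
move=> Fmu Fnu y; move: (Fmu y) (Fnu y) => /andP[? ?] /andP[? ?].
by rewrite /funion le_max ge_max; apply/andP; split; [apply/orP; left|apply/andP].
Qed.

Lemma fuzzy_foplus_compl (mu nu : Y -> R) :
  fuzzy mu -> fuzzy nu -> fuzzy (foplus (fcompl mu) (fcompl nu)).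
Proof.
move=> Fmu Fnu y; rewrite /foplus /fcompl.
move: (Fmu y) (Fnu y) => /andP[? ?] /andP[? ?].
rewrite ge_min lexx orbT andbT le_min ler01 andbT; lra.
Qed.

Lemma foplus_compl_le (lam lam' m m' : Y -> R) :
  fsub lam lam' -> fsub m m' ->
  fsub (foplus (fcompl lam') (fcompl m')) (foplus (fcompl lam) (fcompl m)).
Proof.
move=> le_lam le_m y; rewrite /foplus /fcompl.
have := le_lam y; have := le_m y => ? ?.
by rewrite le_min !ge_min lexx !orbT andbT; apply/orP; left; lra.
Qed.

End FuzzySets.

Section Diamond.
Variables (R : realType) (Y : Type) (T P : set (Y -> R)).
Hypothesis HT : fuzzy_topology T.
Hypothesis HP : fuzzy_primal P.

Definition diamond_pts (lam : Y -> R) (y : Y) : set R :=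
  [set t : R | 0 < t <= 1 /\
     forall mu, Qnbhd T y t mu -> P (foplus (fcompl lam) (fcompl mu))].

Lemma fdiamond_ge lam y t : diamond_pts lam y t -> t <= fdiamond T P lam y.
Proof. by apply: ub_le_sup; exists 1 => s [/andP[_ ->]]. Qed.

Lemma fdiamond_le lam y x :
  0 <= x -> ubound (diamond_pts lam y) x -> fdiamond T P lam y <= x.
Proof. exact: sup_le_nonneg. Qed.

Lemma fuzzy_fdiamond lam : fuzzy (fdiamond T P lam).
Proof.
move=> y; apply/andP; split; last by apply: fdiamond_le => // t [/andP[_ ->]].
by apply: sup_ge0 => t [/andP[/ltW ->]].
Qed.

Lemma not_diamond_pts lam y t : 0 < t <= 1 -> ~ diamond_pts lam y t ->
  exists2 m, Qnbhd T y t m & ~ P (foplus (fcompl lam) (fcompl m)).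
Proof.
move=> t01 notD; apply: contra_notP notD => noWitness; split => // m Qm.
by apply: contra_notP noWitness => nPm; exists m.
Qed.

Lemma fdiamond0 : fdiamond T P (@fzero R Y) = @fzero R Y.
Proof.
case: HT => _ _ T1 _ _; case: HP => _ nP1 _ _.
apply: funext => y; apply/le_anti; rewrite (andP (fuzzy_fdiamond _ y)).1 andbT.
apply: fdiamond_le => // t [/andP[t_gt0 _] Dt]; exfalso; apply: nP1.
have <- : foplus (fcompl (@fzero R Y)) (fcompl (@fone R Y)) = @fone R Y.
  by apply: funext => z; rewrite /foplus /fcompl /fzero /fone subr0 subrr addr0 minxx.
by apply: Dt; split => //; rewrite /fone; lra.
Qed.

Lemma fdiamondS lam lam' : fuzzy lam' -> fsub lam lam' ->
  fsub (fdiamond T P lam) (fdiamond T P lam').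
Proof.
case: HT => Tfuzzy _ _ _ _; case: HP => _ _ Phered _.
move=> Flam' le_lam y; apply: fdiamond_le; first by case/andP: (fuzzy_fdiamond lam' y).
move=> t [t01 Dt]; apply: fdiamond_ge; split => // m Qm.
apply: Phered (Dt m Qm) _; first by apply: fuzzy_foplus_compl => //; apply/Tfuzzy; case: Qm.
exact: foplus_compl_le.
Qed.

Lemma Qnbhd_finter y t m1 m2 :
  Qnbhd T y t m1 -> Qnbhd T y t m2 -> Qnbhd T y t (finter m1 m2).
Proof.
case: HT => _ _ _ TI _; move=> [T1 q1] [T2 q2]; split; first exact: TI.
rewrite /finter; have : 1 - t < Num.min (m1 y) (m2 y) by rewrite lt_min; apply/andP; lra.
lra.
Qed.

Lemma primal_foplus_finter mu nu m1 m2 :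
  fuzzy mu -> fuzzy nu -> fuzzy m1 -> fuzzy m2 ->
  P (foplus (fcompl (funion mu nu)) (fcompl (finter m1 m2))) ->
  P (foplus (fcompl mu) (fcompl m1)) \/ P (foplus (fcompl nu) (fcompl m2)).
Proof.
case: HP => _ _ Phered Pinter => Fmu Fnu Fm1 Fm2 PU.
have F1 := fuzzy_foplus_compl Fmu Fm1; have F2 := fuzzy_foplus_compl Fnu Fm2.
apply: Pinter => //; apply: Phered PU _.
  move=> z; move: (F1 z) (F2 z) => /andP[? ?] /andP[? ?].
  by rewrite /finter le_min ge_min; apply/andP; split; [apply/andP|apply/orP; left].
move=> z; rewrite /finter /foplus /fcompl /funion le_min.
apply/andP; split; last by rewrite !ge_min lexx orbT.
have le_m1 : Num.min (m1 z) (m2 z) <= m1 z by rewrite ge_min lexx.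
have le_m2 : Num.min (m1 z) (m2 z) <= m2 z by rewrite ge_min lexx orbT.
case: (leP (mu z) (nu z)) => le_mu_nu.
  by rewrite ge_min; apply/orP; right; rewrite ge_min; apply/orP; left; lra.
by rewrite ge_min; apply/orP; left; rewrite ge_min; apply/orP; left; lra.
Qed.

Lemma fdiamondU mu nu : fuzzy mu -> fuzzy nu ->
  fdiamond T P (funion mu nu) = funion (fdiamond T P mu) (fdiamond T P nu).
Proof.
case: HT => Tfuzzy _ _ _ _ => Fmu Fnu; have Fmunu := fuzzy_funion Fmu Fnu.
apply: funext => y; apply/le_anti; apply/andP; split; last first.
  by rewrite ge_max !fdiamondS // => z; rewrite /funion le_max lexx ?orbT.
apply: fdiamond_le; first by rewrite le_max (andP (fuzzy_fdiamond mu y)).1.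
move=> t [t01 Dt]; rewrite leNgt; apply/negP; rewrite gt_max => /andP[lt_mu lt_nu].
have [m1 Q1 nP1] : exists2 m, Qnbhd T y t m & ~ P (foplus (fcompl mu) (fcompl m)).
  by apply: not_diamond_pts => // /fdiamond_ge; rewrite leNgt lt_mu.
have [m2 Q2 nP2] : exists2 m, Qnbhd T y t m & ~ P (foplus (fcompl nu) (fcompl m)).
  by apply: not_diamond_pts => // /fdiamond_ge; rewrite leNgt lt_nu.
have [] := primal_foplus_finter Fmu Fnu (Tfuzzy _ Q1.1) (Tfuzzy _ Q2.1)
  (Dt _ (Qnbhd_finter Q1 Q2)); by [apply: nP1|apply: nP2].
Qed.

Lemma fdiamond_sub_compl lam m : fuzzy m -> T m ->
  ~ P (foplus (fcompl lam) (fcompl m)) -> fsub (fdiamond T P lam) (fcompl m).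
Proof.
move=> Fm Tm nPm z; apply: fdiamond_le; first by case/andP: (Fm z) => _; rewrite subr_ge0.
move=> s [s01 Ds]; rewrite leNgt; apply/negP => lt_s.
by apply: nPm; apply: Ds; split => //; rewrite /fcompl in lt_s; lra.
Qed.

Lemma fdiamond_diamond lam : fsub (fdiamond T P (fdiamond T P lam)) (fdiamond T P lam).
Proof.
case: HT => Tfuzzy _ _ _ _; case: HP => _ nP1 _ _.
move=> y; apply: fdiamond_le; first by case/andP: (fuzzy_fdiamond lam y).
move=> t [t01 DDt]; apply: fdiamond_ge; split => // m Qm.
apply: contra_notP nP1 => nPm; have Fm := Tfuzzy _ Qm.1.
have <- : foplus (fcompl (fdiamond T P lam)) (fcompl m) = @fone R Y.
  apply: funext => z; rewrite /foplus /fcompl /fone min_r //.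
  by have := fdiamond_sub_compl Fm Qm.1 nPm z; rewrite /fcompl; lra.
exact: DDt.
Qed.

Lemma Cldiamond0 : Cldiamond T P (@fzero R Y) = @fzero R Y.
Proof. by rewrite /Cldiamond fdiamond0; apply: funext => y; rewrite /funion maxxx. Qed.

Lemma sub_Cldiamond mu : fsub mu (Cldiamond T P mu).
Proof. by move=> y; rewrite /Cldiamond /funion le_max lexx. Qed.

Lemma CldiamondU mu nu : fuzzy mu -> fuzzy nu ->
  Cldiamond T P (funion mu nu) = funion (Cldiamond T P mu) (Cldiamond T P nu).
Proof.
move=> Fmu Fnu; rewrite /Cldiamond fdiamondU //.
by apply: funext => y; rewrite /funion maxACA.
Qed.

Lemma CldiamondK mu : fuzzy mu ->
  Cldiamond T P (Cldiamond T P mu) = Cldiamond T P mu.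
Proof.
move=> Fmu; apply: funext => y.
rewrite {1}/Cldiamond fdiamondU //; last exact: fuzzy_fdiamond.
rewrite [in LHS]/funion; apply: max_l.
rewrite /Cldiamond /funion ge_max !le_max lexx orbT /=.
by rewrite fdiamond_diamond orbT.
Qed.

End Diamond.

Theorem theorem4p5 (R : realType) (Y : Type) (y0 : Y)
    (T P : set (Y -> R)) :
  fuzzy_topology T -> fuzzy_primal P ->
  [/\ Cldiamond T P (@fzero R Y) = @fzero R Y,
      (forall mu, fuzzy mu -> fsub mu (Cldiamond T P mu)),
      (forall mu nu, fuzzy mu -> fuzzy nu ->
         Cldiamond T P (funion mu nu)
         = funion (Cldiamond T P mu) (Cldiamond T P nu)) &
      (forall mu, fuzzy mu ->
         Cldiamond T P (Cldiamond T P mu) = Cldiamond T P mu)].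
Proof.
move=> HT HP; split.
- exact: Cldiamond0.
- by move=> mu _; apply: sub_Cldiamond.
- exact: CldiamondU.
- exact: CldiamondK.
Qed.
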